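(* Let $T$ be a tournament and $X=(v_1,\dots,v_k)$, $k\ge2$, a list of distinct vertices of $T$ satisfying the $U$-property. Then $T[\{v_1,\dots,v_k\}]$ is the tournament $U_k$ (with $v_i$ playing the role of the $i$-th vertex of $U_k$).
   Context: A tournament is a digraph with exactly one arc between each pair of distinct vertices; $d^-(v)$ is the in-degree of $v$ in $T$. A list $(v_1,\dots,v_k)$ with $k\ge2$ satisfies the $U$-property if $d^-(v_1)=1$ and, for each $i\in\{2,\dots,k\}$, $(v_i,v_{i-1})\in A(T)$ and $d^-(v_i)=i-1$. $U_k$ is the tournament on $\{v_1,\dots,v_k\}$ with arc set $\{(v_{i+1},v_i): i\in[k-1]\}\cup\{(v_i,v_j): 1\le i<k,\ i+1<j\le k\}$. *)

From mathcomp Require Import all_boot.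
Set Implicit Arguments. Unset Strict Implicit. Unset Printing Implicit Defensive.

Definition is_tournament (V : finType) (arc : rel V) : Prop :=
  (forall x, ~~ arc x x) /\
  (forall x y, x != y -> arc x y (+) arc y x).

Definition indeg (V : finType) (arc : rel V) (v : V) : nat :=
  #|[set u | arc u v]|.

(* U-property for the list (v 1, ..., v k) (1-based indexing). *)
Definition U_property (V : finType) (arc : rel V) (k : nat) (v : nat -> V) : Prop :=
  indeg arc (v 1) = 1 /\
  (forall i, 2 <= i <= k -> arc (v i) (v i.-1) /\ indeg arc (v i) = i.-1).

Definition U_arc (k : nat) (i j : nat) : bool :=
  [&& 1 <= j, i == j.+1 & i <= k] || [&& 1 <= i, i < k, i.+1 < j & j <= k].

From mathcomp Require Import all_boot zify.

Set Implicit Arguments.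
Unset Strict Implicit.
Unset Printing Implicit Defensive.

(* For 1 <= i < k, the vertices v (i+1) and v 1, ..., v (i-2) beat v i: the first
   by the U-property, the others by induction on i.  These are max(1, i-1) distinct
   vertices, which is exactly the in-degree of v i, so they are all of its
   in-neighbours.  Hence v i beats every v j with i+1 < j <= k, and the remaining
   arcs are fixed by the U-property and antisymmetry. *)

Section Tournament.

Variables (V : finType) (arc : rel V).
Hypothesis tour : is_tournament arc.

Lemma tournament_irrefl x : arc x x = false.
Proof. by apply/negbTE; case: tour. Qed.

Lemma tournament_arcC x y : x != y -> arc y x = ~~ arc x y.
Proof. by case: tour => _ /(_ x y) t /t; case: (arc x y); case: (arc y x). Qed.

Section UList.

Variables (k : nat) (v : nat -> V).
Hypothesis v_inj : {in [pred i | 1 <= i <= k] &, injective v}.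
Hypothesis Uv : U_property arc k v.

Lemma inj_v_eq a b : 1 <= a <= k -> 1 <= b <= k -> (v a == v b) = (a == b).
Proof.
by move=> ha hb; apply/eqP/eqP => [/v_inj|->]; [apply; rewrite inE | ].
Qed.

Lemma arc_v_pred i : 2 <= i <= k -> arc (v i) (v i.-1).
Proof. by case: Uv => _ /[apply] -[]. Qed.

Lemma indeg_v i : 1 <= i <= k -> indeg arc (v i) = (i.-2).+1.
Proof.
case: Uv => h1 hU hi; have [->|i1] := eqVneq i 1; first exact: h1.
by have [_ ->] := hU i ltac:(lia); lia.
Qed.

Definition U_in_idx i := i.+1 :: iota 1 i.-2.

Definition U_in_nbrs i := [set x in map v (U_in_idx i)].

Lemma mem_U_in_idx i m :
  (m \in U_in_idx i) = (m == i.+1) || (1 <= m) && (m.+1 < i).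
Proof. by rewrite inE mem_iota; congr (_ || _); lia. Qed.

Lemma card_U_in_nbrs i : 1 <= i < k -> #|U_in_nbrs i| = (i.-2).+1.
Proof.
move=> hi; have uniq_idx : uniq (U_in_idx i).
  by rewrite /= iota_uniq mem_iota andbT; apply/negP; lia.
rewrite cardsE (card_uniqP _); first by rewrite size_map /= size_iota.
rewrite map_inj_in_uniq //.
move=> a b; rewrite !mem_U_in_idx => ha hb /eqP.
by rewrite inj_v_eq; [move/eqP | lia | lia].
Qed.

Lemma in_nbrs_vE i :
  1 <= i < k -> (forall m, 1 <= m -> m.+1 < i -> arc (v m) (v i)) ->
  [set u | arc u (v i)] = U_in_nbrs i.
Proof.
move=> hi IH; apply/esym/eqP; rewrite eqEcard card_U_in_nbrs //.
rewrite -[#|_ _|]/(indeg arc (v i)) indeg_v ?leqnn ?andbT; last lia.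
apply/subsetP => x; rewrite !in_set => /mapP[m].
rewrite mem_U_in_idx => /orP[/eqP-> | hm] ->.
  by apply: (@arc_v_pred i.+1); lia.
by case/andP: hm; apply: IH.
Qed.

Lemma arc_v_forward i j : 1 <= i -> i.+1 < j <= k -> arc (v i) (v j).
Proof.
elim/ltn_ind: i j => i IH j hi hj.
have /in_nbrs_vE nbrs : 1 <= i < k by lia.
have vij : v i != v j by rewrite inj_v_eq; lia.
rewrite -[arc _ _]negbK -tournament_arcC //; apply/negP => ji.
have : v j \in [set u | arc u (v i)] by rewrite inE.
rewrite nbrs; last by move=> m hm hmi; apply: IH; lia.
rewrite in_set => /mapP[m]; rewrite mem_U_in_idx => hm /eqP.
by rewrite inj_v_eq; lia.
Qed.

End UList.
End Tournament.

Theorem mainTheorem17 (V : finType) (arc : rel V) (k : nat) (v : nat -> V) :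
  is_tournament arc ->
  2 <= k ->
  {in [pred i | 1 <= i <= k] &, injective v} ->
  U_property arc k v ->
  forall i j, 1 <= i <= k -> 1 <= j <= k ->
    arc (v i) (v j) = U_arc k i j.
Proof.
move=> tour _ v_inj Uv i j hi hj; rewrite /U_arc.
have arcC a b : 1 <= a <= k -> 1 <= b <= k -> a != b ->
    arc (v b) (v a) = ~~ arc (v a) (v b).
  by move=> ha hb ab; apply: tournament_arcC; rewrite // (inj_v_eq v_inj).
have [->|nij] := eqVneq i j; first by rewrite (tournament_irrefl tour); lia.
have [ei|nei] := eqVneq i j.+1; first by rewrite ei (arc_v_pred Uv) //; lia.
have [ej|nej] := eqVneq j i.+1.
  by subst j; rewrite (arcC i.+1 i) ?(arc_v_pred Uv) //=; lia.
have [lt|gt] := ltnP i j; first by rewrite (arc_v_forward tour v_inj Uv) //; lia.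
by rewrite (arcC j i) ?(arc_v_forward tour v_inj Uv) //; lia.
Qed.
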